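(* Let $n=2m$, let $\Delta'$ be the simplicial complex on vertex set $\{(i,j):1\le i\le j\le n,\ i+j\ne n+1\}$ whose faces are the sets $F$ with $\prod_{(i,j)\in F}x_{ij}\notin K(2,n)$, where $K(2,n)$ is as in the context. Let $P$ be a facet of $\Delta'$, $P$ a facet of $\Delta_A$ with $A\in\mathcal A$, and let $x\in P$. Then there are exactly two facets of $\Delta'$ containing $P\setminus\{x\}$, namely $P$ and a facet $Q$ described as follows: (i) if $x$ is a turn (left or right) of $P$, then $Q$ is the unique facet of $\Delta_A$ other than $P$ containing $P\setminus\{x\}$ (the path obtained from $P$ by flipping $x$); (ii) if $x$ is isolated with index $i\in A$, then with $A'=(A\setminus\{i\})\cup\{n+1-i\}$, $P\setminus\{x\}$ is a face of $\Delta_{A'}$ contained in a unique facet $Q$ of $\Delta_{A'}$.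
   Context: $K(2,n)\subset K[x_{ij}:1\le i\le j\le n]$ is generated by the products $x_{ij}x_{hk}$ ($i\le j$, $h\le k$) not involving any $x_{a,n+1-a}$ and such that either $a+b=n+1$ for some $a\in\{i,j\}$, $b\in\{h,k\}$, or $i<h$ and $j<k$. $\mathcal A$ is the family of $m$-element subsets $A\subseteq[n]$ with $i+j\ne n+1$ for all $i,j\in A$. For $A=\{a_1<\dots<a_m\}\in\mathcal A$, $T_A=\{(i,j): i\le j,\ i,j\in A\}$ and $\Delta_A=\{F\in\Delta':F\subseteq T_A\}$. It is a fact (established in the paper) that the facets of $\Delta_A$ are exactly the paths in $T_A$ starting at $(a_1,a_m)$ and ending at some diagonal position $(a_i,a_i)$, each step going horizontally left ($(a_r,a_s)\to(a_r,a_{s-1})$) or vertically down ($(a_r,a_s)\to(a_{r+1},a_s)$), and that every facet of $\Delta'$ is a facet of $\Delta_A$ for exactly one $A$. Types of points of such a path $P$: an interior point is a left turn if the step into it is horizontal and the step out is vertical, a right turn if the step in is vertical and the step out horizontal; the last point (if $P$ has at least two points) is a left turn if the last step is horizontal and a right turn if it is vertical; all other points are isolated, and each isolated point is the only point of $P$ having a certain $c\in A$ as row or column index, $c$ being called its index. *)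

From mathcomp Require Import all_boot.
Set Implicit Arguments. Unset Strict Implicit. Unset Printing Implicit Defensive.

(* Points (i,j) with 0 <= i,j <= n; only those with 1 <= i <= j are variables
   x_{ij} of K[x_ij : 1 <= i <= j <= n]. *)
Definition pt (n : nat) := ('I_n.+1 * 'I_n.+1)%type.
Definition pt0 (n : nat) : pt n := (ord0, ord0).

Definition is_var n (u : pt n) : bool := (0 < u.1) && (u.1 <= u.2).
Definition antidiag n (u : pt n) : bool := u.1 + u.2 == n.+1.
Definition vertexV n (u : pt n) : bool := is_var u && ~~ antidiag u.

Definition K_gen n (u v : pt n) : bool :=
  [&& is_var u, is_var v, ~~ antidiag u, ~~ antidiag v &
      [|| u.1 + v.1 == n.+1, u.1 + v.2 == n.+1, u.2 + v.1 == n.+1,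
          u.2 + v.2 == n.+1 | (u.1 < v.1) && (u.2 < v.2)]].

(* Monomials are represented by exponent vectors; exponent vector of x_u x_v *)
Definition gen_exp n (u v : pt n) (y : pt n) : nat := (y == u) + (y == v).

Definition in_K2n n (e : pt n -> nat) : Prop :=
  exists u v : pt n, K_gen u v /\ forall y, gen_exp u v y <= e y.

Definition monomial_of n (F : {set pt n}) : pt n -> nat :=
  fun y => nat_of_bool (y \in F).

Definition Delta' n (F : {set pt n}) : Prop :=
  (forall y, y \in F -> vertexV y) /\ ~ in_K2n (monomial_of F).

Definition facet n (C : {set pt n} -> Prop) (F : {set pt n}) : Prop :=
  C F /\ forall G, C G -> F \subset G -> G = F.

Definition in_calA (m : nat) (A : {set 'I_(2 * m).+1}) : Prop :=
  [/\ #|A| = m, (forall i, i \in A -> 0 < i) &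
      forall i j, i \in A -> j \in A -> i + j != (2 * m).+1].

Definition T_A n (A : {set 'I_n.+1}) : {set pt n} :=
  [set u | [&& u.1 \in A, u.2 \in A & u.1 <= u.2]].

Definition DeltaA n (A : {set 'I_n.+1}) (F : {set pt n}) : Prop :=
  Delta' F /\ F \subset T_A A.

Definition consec n (A : {set 'I_n.+1}) (c d : 'I_n.+1) : bool :=
  [&& c \in A, d \in A, c < d & [forall e in A, ~~ ((c < e) && (e < d))]].

Definition hstep n (A : {set 'I_n.+1}) (u v : pt n) : bool :=
  (v.1 == u.1) && consec A v.2 u.2.
Definition vstep n (A : {set 'I_n.+1}) (u v : pt n) : bool :=
  (v.2 == u.2) && consec A u.1 v.1.

Definition is_path n (A : {set 'I_n.+1}) (s : seq (pt n)) : bool :=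
  match s with
  | [::] => false
  | p0 :: s' =>
      [&& p0.1 \in A, [forall c in A, p0.1 <= c],
          p0.2 \in A, [forall c in A, c <= p0.2],
          all (fun u => u \in T_A A) s,
          path (fun u v => hstep A u v || vstep A u v) p0 s' &
          (last p0 s').1 == (last p0 s').2]
  end.

Definition left_turn_at n (A : {set 'I_n.+1}) (s : seq (pt n)) (k : nat) : bool :=
  [&& 0 < k, hstep A (nth (pt0 n) s k.-1) (nth (pt0 n) s k) &
      (k.+1 == size s) ||
      (k.+1 < size s) && vstep A (nth (pt0 n) s k) (nth (pt0 n) s k.+1)].
Definition right_turn_at n (A : {set 'I_n.+1}) (s : seq (pt n)) (k : nat) : bool :=
  [&& 0 < k, vstep A (nth (pt0 n) s k.-1) (nth (pt0 n) s k) &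
      (k.+1 == size s) ||
      (k.+1 < size s) && hstep A (nth (pt0 n) s k) (nth (pt0 n) s k.+1)].

Definition turn_in n (A : {set 'I_n.+1}) (s : seq (pt n)) (x : pt n) : Prop :=
  exists k, [/\ k < size s, nth (pt0 n) s k = x &
                left_turn_at A s k || right_turn_at A s k].

Definition is_turn n (A : {set 'I_n.+1}) (P : {set pt n}) (x : pt n) : Prop :=
  exists s, [/\ is_path A s, [set y in s] = P & turn_in A s x].

Definition is_isolated n (A : {set 'I_n.+1}) (P : {set pt n}) (x : pt n) : Prop :=
  exists s, [/\ is_path A s, [set y in s] = P, x \in s & ~ turn_in A s x].

Definition has_index n (A : {set 'I_n.+1}) (P : {set pt n}) (x : pt n)
  (c : 'I_n.+1) : Prop :=
  [/\ c \in A, x.1 = c \/ x.2 = c &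
      forall y, y \in P -> y != x -> y.1 != c /\ y.2 != c].

Definition swapA n (A : {set 'I_n.+1}) (i : 'I_n.+1) : {set 'I_n.+1} :=
  (A :\ i) :|: [set inord (n.+1 - i)].

From mathcomp Require Import all_boot zify.
Set Implicit Arguments. Unset Strict Implicit. Unset Printing Implicit Defensive.

(* Read a point (i, j) of T_A as the interval [i, j].  On T_A two vertices are
   compatible exactly when their intervals are nested, so the faces of Delta_A
   are the chains of nested intervals.  Measured by ranks inside A, the points
   of a chain have distinct widths, hence a facet P of Delta_A has exactly one
   point of each width 0, ..., m - 1.  A replacement for the point x of width k
   must be a width-k interval between the neighbours of widths k - 1 and k + 1
   in P.  Either there is a second such interval q (x is a turn, q its flip),
   or x has a coordinate i that no other point of P uses; then P \ x lies in
   T_A' for A' = A - i + (n + 1 - i), where it misses exactly one width, and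
   the extension of P \ x by that width gives q.  In both cases a vertex
   outside T_A (resp. T_A') compatible with P \ x would pair with an index of
   x, so q is the only vertex besides x compatible with P \ x, and the facets
   of Delta' through P \ x are P and (P \ x) + q. *)

(** * Faces of Delta' and exchanges *)

Section Faces.
Variable n : nat.
Implicit Types (u v : pt n) (B : {set 'I_n.+1}) (F G : {set pt n}).

Definition nested u v : bool :=
  ((u.1 <= v.1) && (v.2 <= u.2)) || ((v.1 <= u.1) && (u.2 <= v.2)).
Definition compatible u v : bool := ~~ K_gen u v && ~~ K_gen v u.
Definition chain F := {in F &, forall u v, nested u v}.
Definition nonzero B := {in B, forall i : 'I_n.+1, 0 < i}.
Definition sumfree B := {in B &, forall i j : 'I_n.+1, i + j != n.+1}.

Lemma nestedC u v : nested u v = nested v u.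
Proof. by rewrite /nested orbC. Qed.

Lemma nested_refl u : nested u u.
Proof. by rewrite /nested !leqnn. Qed.

Lemma compatibleC u v : compatible u v = compatible v u.
Proof. by rewrite /compatible andbC. Qed.

Lemma Delta'E F : Delta' F <->
  (forall y, y \in F -> vertexV y) /\ {in F &, forall u v, u != v -> compatible u v}.
Proof.
rewrite /Delta' /in_K2n /gen_exp /monomial_of; split=> -[hV hK]; split=> //.
  have gen_le u v : u \in F -> v \in F -> u != v ->
      forall y, (y == u) + (y == v) <= (y \in F).
    move=> uF vF uv y; have [->|yu] := eqVneq y u; first by rewrite (negPf uv) uF.
    by have [->|] := eqVneq y v; rewrite ?vF.
  move=> u v uF vF uv; apply/andP; split; apply/negP=> K; apply: hK.
    by exists u, v; split=> //; apply: gen_le.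
  by exists v, u; split=> //; apply: gen_le; rewrite 1?eq_sym.
move=> [u [v [K hle]]]; have := hle u; have := hle v; rewrite !eqxx /=.
have [<-|uv] := eqVneq u v; first by case: (u \in F).
case uF: (u \in F) => //; case vF: (v \in F) => // _ _.
by have /andP[/negP] := hK u v uF vF uv.
Qed.

Lemma Delta'S F G : Delta' F -> G \subset F -> Delta' G.
Proof.
move=> /Delta'E[hV hK] /subsetP sGF; apply/Delta'E; split.
  by move=> y /sGF; apply: hV.
by move=> u v /sGF uF /sGF vF; apply: hK.
Qed.

Lemma mem_T_A B u : (u \in T_A B) = [&& u.1 \in B, u.2 \in B & u.1 <= u.2].
Proof. by rewrite inE. Qed.

Lemma T_A_vertex B u : nonzero B -> sumfree B -> u \in T_A B -> vertexV u.
Proof.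
move=> B0 Bs; rewrite mem_T_A => /and3P[u1 u2 u12].
by rewrite /vertexV /is_var /antidiag B0 //= u12 Bs.
Qed.

Lemma compatible_nested u v : vertexV u -> vertexV v -> compatible u v -> nested u v.
Proof.
move=> /andP[uvar u'] /andP[vvar v'].
rewrite /compatible /K_gen uvar vvar u' v' /= !negb_or /nested; lia.
Qed.

Lemma nested_compatible B u v : sumfree B -> u \in T_A B -> v \in T_A B ->
  nested u v -> compatible u v.
Proof.
move=> Bs; rewrite !mem_T_A => /and3P[u1 u2 _] /and3P[v1 v2 _].
have s i j : i \in B -> j \in B -> (i + j == n.+1) = false by move=> iB jB; apply: negPf; exact: Bs.
rewrite /compatible /K_gen !s //= /nested => h.
by apply/andP; split; apply/negP => /and5P[_ _ _ _]; lia.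
Qed.

Lemma not_nested_K_gen u v : vertexV u -> vertexV v -> ~~ nested u v ->
  K_gen u v || K_gen v u.
Proof.
move=> /andP[uvar u'] /andP[vvar v'].
rewrite /nested /K_gen uvar u' vvar v' /=; lia.
Qed.

Lemma K_gen_coord_sum u v (a b : 'I_n.+1) : vertexV u -> vertexV v ->
  (u.1 = a \/ u.2 = a) -> (v.1 = b \/ v.2 = b) -> a + b = n.+1 -> K_gen u v.
Proof.
move=> /andP[u0 u'] /andP[v0 v'] ha hb ab; rewrite /K_gen u0 u' v0 v' /=.
by case: ha => ->; case: hb => ->; rewrite ab eqxx ?orbT.
Qed.

End Faces.

Lemma facet_le n (C : {set pt n} -> Prop) F G : facet C F -> C G -> F \subset G -> G = F.
Proof. by case=> _; apply. Qed.

Definition exchange n (P : {set pt n}) (x q : pt n) :=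
  [/\ q \notin P, vertexV q, ~~ compatible x q, {in P :\ x, forall p, compatible p q} &
      forall v, vertexV v -> v \notin P :\ x -> {in P :\ x, forall p, compatible p v} ->
        v = x \/ v = q].

Section TwoFacets.
Variables (n : nat) (P : {set pt n}) (x q : pt n).
Hypotheses (P_facet : facet (@Delta' n) P) (xP : x \in P) (xq : exchange P x q).

Lemma faces_over_punctured G : Delta' G -> P :\ x \subset G ->
  G \subset P \/ G \subset q |: (P :\ x).
Proof.
case: xq => qNP _ xNq _ q_unique; move=> /[dup] G_face /Delta'E[GV Gc] sG.
have Gmem v : v \in G -> [\/ v \in P :\ x, v = x | v = q].
  move=> vG; have [|vNS] := boolP (v \in P :\ x); first by constructor 1.
  have vc : {in P :\ x, forall p, compatible p v}.
    move=> p pS; apply: Gc (subsetP sG p pS) vG _.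
    by apply: contraNneq vNS => <-.
  by case: (q_unique v (GV v vG) vNS vc); [constructor 2 | constructor 3].
have [qG|qNG] := boolP (q \in G); [right | left]; apply/subsetP => v vG.
- case: (Gmem v vG) => [vS|vx|->]; rewrite ?setU11 ?setU1r //.
  have qx : q != x by apply: contraNneq qNP => ->.
  by move: xNq; rewrite -vx compatibleC (Gc q v qG vG) // vx.
- case: (Gmem v vG) => [/setD1P[]|->|vq] //.
  by move: vG; rewrite vq (negPf qNG).
Qed.

Lemma exchange_face : Delta' (q |: (P :\ x)).
Proof.
case: xq => _ qV _ qc _; have /Delta'E[PV Pc] := P_facet.1; apply/Delta'E; split.
  by move=> y /setU1P[->|/setD1P[_ /PV]].
move=> u v /setU1P[->|uS] /setU1P[->|vS]; rewrite ?eqxx // => uv.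
- by rewrite compatibleC qc.
- exact: qc.
- by case/setD1P: uS => _ uP; case/setD1P: vS => _ vP; apply: Pc.
Qed.

Lemma exchange_neq : q |: (P :\ x) != P.
Proof. by case: xq => qNP _ _ _ _; apply: contraNneq qNP => <-; rewrite setU11. Qed.

Lemma exchange_facet : facet (@Delta' n) (q |: (P :\ x)).
Proof.
split=> [|G G_face sQG]; first exact: exchange_face.
have sG : P :\ x \subset G by apply: subset_trans sQG; apply: subsetUr.
case: (faces_over_punctured G_face sG) => sGP; last by apply/eqP; rewrite eqEsubset sGP.
case: xq => qNP _ _ _ _.
by move: qNP; rewrite (subsetP (subset_trans sQG sGP)) ?setU11.
Qed.

Lemma facets_over_punctured F :
  (facet (@Delta' n) F /\ P :\ x \subset F) <-> (F = P \/ F = q |: (P :\ x)).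
Proof.
split=> [[F_facet sF]|[->|->]].
- case: (faces_over_punctured F_facet.1 sF) => sFQ; [left | right].
    by apply/esym/(facet_le F_facet) => //; case: P_facet.
  exact/esym/(facet_le F_facet exchange_face).
- by split=> //; apply: subD1set.
- by split; [exact: exchange_facet | exact: subsetUr].
Qed.

Section DeltaA.
Variable B : {set 'I_n.+1}.
Hypotheses (qT : q \in T_A B) (ST : P :\ x \subset T_A B).

Lemma exchange_DeltaA : DeltaA B (q |: (P :\ x)).
Proof. by split; [exact: exchange_face | rewrite subUset sub1set qT]. Qed.

Lemma exchange_DeltaA_facet : facet (DeltaA B) (q |: (P :\ x)).
Proof. by split=> [|G [G_face _]]; [exact: exchange_DeltaA | apply: exchange_facet.2]. Qed.

Lemma DeltaA_facets_over_punctured F : facet (DeltaA B) F -> P :\ x \subset F ->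
  F = q |: (P :\ x) \/ F = P.
Proof.
move=> F_facet sF; have sQ : F \subset q |: (P :\ x) -> F = q |: (P :\ x).
  by move=> sFQ; apply/esym; apply: facet_le F_facet exchange_DeltaA sFQ.
case: (faces_over_punctured F_facet.1.1 sF) => sFP; last by left; apply: sQ.
have [xF|xNF] := boolP (x \in F).
  by right; apply/eqP; rewrite eqEsubset sFP -(setD1K xP) subUset sub1set xF sF.
left; apply: sQ; apply/subsetP => y yF; rewrite setU1r // !inE (subsetP sFP) ?andbT //.
by apply: contraNneq xNF => <-.
Qed.

End DeltaA.

End TwoFacets.

(** * Ranks and widths *)

Lemma uniq_iota_full (s : seq nat) a k :
  uniq s -> {subset s <= iota a k} -> k <= size s -> {subset iota a k <= s}.
Proof.
move=> s_uniq ss sz y; have [|_ ->] // := uniq_min_size s_uniq ss.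
by rewrite size_iota.
Qed.

Section Rank.
Variables (n : nat) (B : {set 'I_n.+1}).
Local Notation M := #|B|.

Definition rk (i : 'I_n.+1) : nat := #|[set y in B | y < i]|.
Implicit Types i j : 'I_n.+1.

Lemma leq_rk i j : i <= j -> rk i <= rk j.
Proof.
move=> ij; apply/subset_leq_card/subsetP => y; rewrite !inE => /andP[-> /leq_trans].
exact.
Qed.

Lemma ltn_rk i j : i \in B -> i < j -> rk i < rk j.
Proof.
move=> iB ij; apply/proper_card/properP; split.
  by apply/subsetP => y; rewrite !inE => /andP[-> /ltn_trans]; apply.
by exists i; rewrite !inE ?iB ?ij ?ltnn.
Qed.

Lemma rk_lt_card i : i \in B -> rk i < M.
Proof.
move=> iB; apply/proper_card/properP; split.
  by apply/subsetP => y; rewrite inE => /andP[].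
by exists i; rewrite // inE ltnn andbF.
Qed.

Lemma rk_mono : {in B &, {mono rk : i j / i <= j}}.
Proof.
move=> i j iB jB; apply/idP/idP; last exact: leq_rk.
by apply: contraTT; rewrite -!ltnNge; apply: ltn_rk.
Qed.

Lemma rk_inj : {in B &, injective rk}.
Proof.
move=> i j iB jB e; apply/val_inj/eqP.
by rewrite eqn_leq -!rk_mono // e leqnn.
Qed.

Lemma rk_onto r : r < M -> exists2 i, i \in B & rk i = r.
Proof.
move=> rM; have uniq_rk : uniq (map rk (enum B)).
  by rewrite map_inj_in_uniq ?enum_uniq // => i j; rewrite !mem_enum; apply: rk_inj.
have /mapP[i] : r \in map rk (enum B).
  apply: (uniq_iota_full (a := 0) (k := M) uniq_rk).
  - by move=> y /mapP[i]; rewrite mem_enum => iB ->; rewrite mem_iota rk_lt_card.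
  - by rewrite size_map -cardE.
  - by rewrite mem_iota.
by rewrite mem_enum; exists i.
Qed.

End Rank.

Definition width n (B : {set 'I_n.+1}) (u : pt n) := rk B u.2 - rk B u.1.

(* The [rk] and [#|_|] terms coming from different lemmas may differ in hidden
   coercions, which lia's syntactic atom matching does not see through:
   abstract them first (up to conversion).  The context is cleared, so the
   facts needed must be moved to the goal. *)
Ltac rk_lia :=
  try rewrite /width;
  repeat match goal with
  | |- context [@rk ?m ?B ?i] => let r := fresh "r" in move: (@rk m B i) => r
  | |- context [#|?A|] => let c := fresh "c" in move: #|A| => c
  end;
  repeat match goal with H : _ |- _ => clear H end;
  lia.

Section Chains.
Variables (n : nat) (B : {set 'I_n.+1}).
Local Notation M := #|B|.
Implicit Types (u v w p : pt n) (S : {set pt n}).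

Definition full S := forall l, l < M -> exists2 p, p \in S & width B p = l.

Lemma rk_T u : u \in T_A B -> rk B u.1 <= rk B u.2 < M.
Proof. by rewrite mem_T_A => /and3P[u1 u2 u12]; rewrite leq_rk ?rk_lt_card. Qed.

Lemma rk_width u : u \in T_A B -> rk B u.1 + width B u = rk B u.2.
Proof. by move/rk_T; rk_lia. Qed.

Lemma width_lt u : u \in T_A B -> width B u < M.
Proof. by move/rk_T; rk_lia. Qed.

Lemma nested_rk u v : u \in T_A B -> v \in T_A B -> nested u v =
  ((rk B u.1 <= rk B v.1) && (rk B v.2 <= rk B u.2)) || ((rk B v.1 <= rk B u.1) && (rk B u.2 <= rk B v.2)).
Proof. by rewrite !mem_T_A => /and3P[? ? _] /and3P[? ? _]; rewrite /nested !rk_mono. Qed.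

Lemma rk_pt_inj u v : u \in T_A B -> v \in T_A B ->
  rk B u.1 = rk B v.1 -> rk B u.2 = rk B v.2 -> u = v.
Proof.
case: u v => [u1 u2] [v1 v2]; rewrite !mem_T_A => /and3P[/= u1B u2B _] /and3P[/= v1B v2B _].
by move=> /(rk_inj u1B v1B) -> /(rk_inj u2B v2B) ->.
Qed.

Lemma rk_width_inj u v : u \in T_A B -> v \in T_A B ->
  rk B u.1 = rk B v.1 -> width B u = width B v -> u = v.
Proof.
move=> uT vT e1 ew; apply: rk_pt_inj => //.
by rewrite -(rk_width uT) -(rk_width vT) e1 ew.
Qed.

Lemma nested_width_inj u v : u \in T_A B -> v \in T_A B ->
  nested u v -> width B u = width B v -> u = v.
Proof.
move=> uT vT; rewrite nested_rk // => uv ew; apply: rk_width_inj => //.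
by move: uv ew (rk_width uT) (rk_width vT); rk_lia.
Qed.

Section Chain.
Variable S : {set pt n}.
Hypotheses (ST : S \subset T_A B) (S_chain : chain S).

Lemma chain_T u : u \in S -> u \in T_A B.
Proof. exact: subsetP. Qed.

Lemma chain_rk u v : u \in S -> v \in S ->
  ((rk B u.1 <= rk B v.1) && (rk B v.2 <= rk B u.2)) || ((rk B v.1 <= rk B u.1) && (rk B u.2 <= rk B v.2)).
Proof. by move=> uS vS; rewrite -nested_rk ?chain_T ?S_chain. Qed.

Lemma chain_width_inj : {in S &, injective (width B)}.
Proof. by move=> u v uS vS; apply: nested_width_inj; rewrite ?chain_T ?S_chain. Qed.

Lemma chain_width_le u v : u \in S -> v \in S -> width B u <= width B v ->
  rk B v.1 <= rk B u.1 /\ rk B u.2 <= rk B v.2.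
Proof.
move=> uS vS; have := chain_rk uS vS.
by move: (rk_width (chain_T uS)) (rk_width (chain_T vS)); rk_lia.
Qed.

Lemma uniq_widths : uniq (map (width B) (enum S)).
Proof.
rewrite map_inj_in_uniq ?enum_uniq // => u v.
by rewrite !mem_enum; apply: chain_width_inj.
Qed.

Lemma widths_sub : {subset map (width B) (enum S) <= iota 0 M}.
Proof.
by move=> l /mapP[u]; rewrite mem_enum mem_iota => uS ->; rewrite width_lt ?chain_T.
Qed.

Lemma chain_card : #|S| <= M.
Proof.
by rewrite cardE -(size_map (width B)) -(size_iota 0 M) (uniq_leq_size uniq_widths widths_sub).
Qed.

Lemma chain_full : M <= #|S| -> full S.
Proof.
move=> MS l lM; have /mapP[u] : l \in map (width B) (enum S).
  by apply: (uniq_iota_full uniq_widths widths_sub); rewrite ?size_map -?cardE ?mem_iota.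
by rewrite mem_enum => uS ->; exists u.
Qed.

Lemma chain_extend l : l < M -> {in S, forall p, width B p != l} ->
  exists w, [/\ w \in T_A B, width B w = l & {in S, forall p, nested w p}].
Proof.
move=> lM Sl.
(* In ranks w = [a, a + l], a = max a1 a2 being the least start meeting the
   lower bounds; the chain property gives the upper bounds. *)
set a1 := \max_(p | (p \in S) && (l < width B p)) rk B p.1.
set a2 := \max_(p | (p \in S) && (width B p < l)) (rk B p.2 - l).
have a1_ge p : p \in S -> l < width B p -> rk B p.1 <= a1.
  by move=> pS lp; rewrite /a1 (bigD1 p) ?pS ?lp ?leq_maxl.
have a2_ge p : p \in S -> width B p < l -> rk B p.2 - l <= a2.
  by move=> pS pl; rewrite /a2 (bigD1 p) ?pS ?pl ?leq_maxl.
have a1_lub c : (forall p, p \in S -> l < width B p -> rk B p.1 <= c) -> a1 <= c.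
  by move=> hc; apply/bigmax_leqP => p /andP[]; apply: hc.
have a2_lub c : (forall p, p \in S -> width B p < l -> rk B p.2 - l <= c) -> a2 <= c.
  by move=> hc; apply/bigmax_leqP => p /andP[]; apply: hc.
clearbody a1 a2.
have a1_le : a1 <= M - 1 - l by apply: a1_lub => p /chain_T/rk_T; rk_lia.
have a2_le : a2 <= M - 1 - l by apply: a2_lub => p /chain_T/rk_T; rk_lia.
have [e1 e1B r1] := @rk_onto _ B (maxn a1 a2) ltac:(move: a1_le a2_le lM; rk_lia).
have [e2 e2B r2] := @rk_onto _ B (maxn a1 a2 + l) ltac:(move: a1_le a2_le lM; rk_lia).
have wT : (e1, e2) \in T_A B by rewrite mem_T_A /= e1B e2B -(rk_mono e1B e2B) r1 r2 leq_addr.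
exists (e1, e2); split=> //; first by rewrite /width /= r1 r2; rk_lia.
move=> p pS; rewrite (nested_rk wT (chain_T pS)) /= r1 r2.
have := Sl p pS; rewrite neq_ltn => /orP[plt|pgt].
  have := a2_ge p pS plt; suff : maxn a1 a2 <= rk B p.1 by move: plt; rk_lia.
  by rewrite geq_max a1_lub ?a2_lub // => p' p'S hp';
    have := chain_rk pS p'S; move: plt hp'; rk_lia.
have := a1_ge p pS pgt; suff : maxn a1 a2 <= rk B p.2 - l by move: pgt; rk_lia.
by rewrite geq_max a1_lub ?a2_lub // => p' p'S hp';
  have := chain_rk pS p'S; move: pgt hp'; rk_lia.
Qed.

End Chain.

Lemma full_card S : full S -> M <= #|S|.
Proof.
move=> S_full; rewrite [#|S|]cardE -(size_map (width B)) -[M](size_iota 0).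
rewrite uniq_leq_size ?iota_uniq //.
by move=> l; rewrite mem_iota => /S_full[p pS <-]; apply: map_f; rewrite mem_enum.
Qed.

End Chains.

(** * Points of a full chain are flippable or rigid *)

Definition shared n (P : {set pt n}) (x : pt n) (e : 'I_n.+1) :=
  exists2 y, y \in P :\ x & (y.1 == e) || (y.2 == e).

Lemma shared_no_index n (B : {set 'I_n.+1}) (P : {set pt n}) x c :
  (forall e, x.1 = e \/ x.2 = e -> shared P x e) -> ~ has_index B P x c.
Proof.
move=> x_shared [_ xc c_unused]; have [y /setD1P[yx yP] yc] := x_shared c xc.
by have [/negPf y1 /negPf y2] := c_unused y yP yx; rewrite y1 y2 in yc.
Qed.

Section Shape.
Variables (n : nat) (B : {set 'I_n.+1}) (P : {set pt n}).
Hypotheses (P_T : P \subset T_A B) (P_chain : chain P) (P_full : full B P).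
Local Notation M := #|B|.
Implicit Types (p q u v y : pt n).

Definition fits x v := {in P :\ x, forall p, nested v p}.

(* The paper's turns and isolated points, described through P alone. *)
Definition flippable x :=
  (exists q, [/\ q \in T_A B, q \notin P, ~~ nested x q, fits x q &
     forall v, v \in T_A B -> fits x v -> v \in P \/ v = q])
  /\ forall e, x.1 = e \/ x.2 = e -> shared P x e.

Definition rigid x :=
  (forall v, v \in T_A B -> fits x v -> v \in P) /\
  exists c, has_index B P x c /\ forall e, has_index B P x e -> e = c.

Let PT := chain_T P_T.

Let P_width_inj p q : p \in P -> q \in P -> width B p = width B q -> p = q.
Proof. exact: chain_width_inj. Qed.

Let P_width_le p q : p \in P -> q \in P -> width B p <= width B q ->
  rk B q.1 <= rk B p.1 /\ rk B p.2 <= rk B q.2.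
Proof. exact: chain_width_le. Qed.

Variable x : pt n.
Hypothesis xP : x \in P.
Let xT := PT xP.
Let x1B : x.1 \in B. Proof. by move: xT; rewrite mem_T_A => /and3P[]. Qed.
Let x2B : x.2 \in B. Proof. by move: xT; rewrite mem_T_A => /and3P[]. Qed.

Lemma P_width_neq y : y \in P :\ x -> width B y != width B x.
Proof. by case/setD1P=> yx yP; apply: contraNneq yx => /P_width_inj ->. Qed.

Lemma fits_width_mem v : v \in T_A B -> fits x v -> width B v != width B x -> v \in P.
Proof.
move=> vT vx vNx; have [p pP pv] := P_full (width_lt vT).
have pS : p \in P :\ x by rewrite !inE pP andbT; apply: contraNneq vNx => <-; rewrite pv.
by rewrite (nested_width_inj vT (PT pP) (vx p pS) (esym pv)).
Qed.

Lemma shared_rk y e : y \in P :\ x -> e \in B -> rk B y.1 = rk B e \/ rk B y.2 = rk B e ->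
  shared P x e.
Proof.
move=> yS eB ye; exists y => //; have /setD1P[_ /PT] := yS.
rewrite mem_T_A => /and3P[y1B y2B _].
by case: ye => /rk_inj ->; rewrite ?eqxx ?orbT.
Qed.

Lemma neighbour_above : (width B x).+1 < M -> exists2 U, U \in P :\ x &
  [/\ width B U = (width B x).+1, rk B U.1 <= rk B x.1 /\ rk B x.2 <= rk B U.2 &
      forall y, y \in P -> width B x < width B y -> rk B y.1 <= rk B U.1 /\ rk B U.2 <= rk B y.2].
Proof.
move=> kM; have [U UP wU] := P_full kM; exists U.
  by rewrite !inE UP andbT; apply/eqP => Ux; move: wU; rewrite Ux; lia.
split=> //; first by apply: P_width_le; rewrite ?wU.
by move=> y yP xy; apply: P_width_le; rewrite ?wU.
Qed.

Lemma neighbour_below : 0 < width B x -> exists2 D, D \in P :\ x &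
  [/\ (width B D).+1 = width B x, rk B x.1 <= rk B D.1 /\ rk B D.2 <= rk B x.2 &
      forall y, y \in P -> width B y < width B x -> rk B D.1 <= rk B y.1 /\ rk B y.2 <= rk B D.2].
Proof.
move=> k0; have [D DP wD] := P_full (leq_ltn_trans (leq_pred _) (width_lt xT)).
have wD' : (width B D).+1 = width B x by rewrite wD prednK.
exists D; first by rewrite !inE DP andbT; apply/eqP => Dx; move: wD'; rewrite Dx; lia.
split=> //; first by apply: P_width_le; rewrite // -wD'.
by move=> y yP yx; apply: P_width_le; rewrite // -ltnS wD'.
Qed.

Lemma flip_inside U : U \in P :\ x -> width B U = (width B x).+1 ->
  rk B U.1 <= rk B x.1 /\ rk B x.2 <= rk B U.2 ->
  (forall y, y \in P -> width B x < width B y -> rk B y.1 <= rk B U.1 /\ rk B U.2 <= rk B y.2) ->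
  (forall y, y \in P -> width B y < width B x -> rk B U.1 < rk B y.1 /\ rk B y.2 < rk B U.2) ->
  exists q, [/\ q \in T_A B, q \notin P, ~~ nested x q, fits x q &
    forall v, v \in T_A B -> fits x v -> v \in P \/ v = q].
Proof.
move=> US wU [Ux1 Ux2] above below; have /setD1P[_ UP] := US; have UT := PT UP.
have xw := rk_width xT; have Uw := rk_width UT; have UM := rk_T UT.
(* In ranks U = [u, u + k + 1] holds two intervals of width k, starting at u
   and u + 1; the flip starts at the one x does not. *)
have [e1 e1B r1] := @rk_onto _ B (rk B U.1 + rk B U.1 + 1 - rk B x.1)
  ltac:(move: Ux1 Ux2 wU xw Uw UM; rk_lia).
have [e2 e2B r2] := @rk_onto _ B (rk B e1 + width B x)
  ltac:(move: r1 Ux1 Ux2 wU xw Uw UM; rk_lia).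
have qT : (e1, e2) \in T_A B by rewrite mem_T_A /= e1B e2B -(rk_mono e1B e2B) r2 leq_addr.
have wq : width B (e1, e2) = width B x by move: r2; rewrite /width /=; rk_lia.
have qx1 : rk B e1 != rk B x.1 by move: r1 Ux1 Ux2 wU xw Uw; rk_lia.
exists (e1, e2); split=> //.
- by apply: contra qx1 => qP; rewrite -(P_width_inj qP xP wq).
- by apply: contra qx1 => /(nested_width_inj xT qT)/(_ (esym wq)) ->.
- move=> y yS; have /setD1P[_ yP] := yS; rewrite (nested_rk qT (PT yP)) /= r2.
  have := P_width_neq yS; rewrite neq_ltn => /orP[/(below y yP)|/(above y yP)];
    by move: r1 Ux1 Ux2 wU xw Uw; rk_lia.
move=> v vT vx; have [vw|vw] := eqVneq (width B v) (width B x); last first.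
  by left; apply: fits_width_mem.
have := vx U US; rewrite (nested_rk vT UT) => vU.
have : rk B v.1 = rk B x.1 \/ rk B v.1 = rk B e1.
  by move: vU vw r1 Ux1 Ux2 wU xw Uw (rk_width vT); rk_lia.
by case=> [/(rk_width_inj vT xT)/(_ vw) ->|/(rk_width_inj vT qT) ->]; [left | right | rewrite vw wq].
Qed.

Lemma rigid_of_index c : c \in B -> x.1 = c \/ x.2 = c ->
  (forall v, v \in T_A B -> width B v = width B x -> fits x v -> rk B v.1 = rk B x.1) ->
  (forall y, y \in P :\ x -> rk B y.1 != rk B c /\ rk B y.2 != rk B c) ->
  (forall e, x.1 = e \/ x.2 = e -> e != c -> shared P x e) ->
  rigid x.
Proof.
move=> cB xc cand unshared other; split.
  move=> v vT vx; have [vw|vw] := eqVneq (width B v) (width B x).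
    by rewrite (rk_width_inj vT xT (cand v vT vw vx) vw).
  exact: fits_width_mem.
exists c; split=> [|e [_ xe e_index]].
  split=> // y yP yx; have [y1 y2] : rk B y.1 != rk B c /\ rk B y.2 != rk B c.
    by apply: unshared; rewrite !inE yx yP.
  by split; [apply: contra_neq y1 => -> | apply: contra_neq y2 => ->].
apply/eqP; apply: contraT => ec; have [y /setD1P[yx yP] ye] := other e xe ec.
by have [/negPf y1 /negPf y2] := e_index y yP yx; rewrite y1 y2 in ye.
Qed.

Lemma shape_bottom : width B x = 0 -> (width B x).+1 < M -> flippable x.
Proof.
move=> k0 kM; have [U US [wU Ux above]] := neighbour_above kM.
split; first by apply: (flip_inside US) => // y _; rewrite k0.
have /setD1P[_ UP] := US.
move=> e [<-|<-]; apply: (shared_rk US) => //;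
  by move: k0 wU Ux (rk_width xT) (rk_width (PT UP)); rk_lia.
Qed.

Section Middle.
Variables U D : pt n.
Hypotheses (US : U \in P :\ x) (wU : width B U = (width B x).+1)
  (Ux : rk B U.1 <= rk B x.1 /\ rk B x.2 <= rk B U.2)
  (above : forall y, y \in P -> width B x < width B y ->
     rk B y.1 <= rk B U.1 /\ rk B U.2 <= rk B y.2).
Hypotheses (DS : D \in P :\ x) (wD : (width B D).+1 = width B x)
  (xD : rk B x.1 <= rk B D.1 /\ rk B D.2 <= rk B x.2)
  (below : forall y, y \in P -> width B y < width B x ->
     rk B D.1 <= rk B y.1 /\ rk B y.2 <= rk B D.2).

Let UT : U \in T_A B. Proof. by case/setD1P: US => _ /PT. Qed.
Let DT : D \in T_A B. Proof. by case/setD1P: DS => _ /PT. Qed.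
Let xw := rk_width xT.
Let Uw := rk_width UT.
Let Dw := rk_width DT.

Lemma middle_flippable : rk B D.1 = (rk B U.1).+1 -> flippable x.
Proof.
move=> central; split.
  apply: (flip_inside US) => // y yP /(below yP).
  by move: central wU wD Ux xD Uw Dw xw; rk_lia.
move=> e xe; have eB : e \in B by case: xe => <-.
have [eU|eD] : (rk B U.1 = rk B e \/ rk B U.2 = rk B e) \/
               (rk B D.1 = rk B e \/ rk B D.2 = rk B e).
  by case: xe => <-; move: central wU wD Ux xD Uw Dw xw; rk_lia.
- exact: shared_rk US eB eU.
- exact: shared_rk DS eB eD.
Qed.

Lemma middle_rigid : rk B D.1 != (rk B U.1).+1 -> rigid x.
Proof.
move=> Ncentral.
have cand v : v \in T_A B -> width B v = width B x -> fits x v ->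
    rk B v.1 <= rk B D.1 /\ rk B D.2 <= rk B v.2 /\ rk B U.1 <= rk B v.1 /\ rk B v.2 <= rk B U.2.
  move=> vT vw vx; have := vx U US; have := vx D DS.
  rewrite (nested_rk vT UT) (nested_rk vT DT).
  by move: (rk_width vT) vw wU wD Uw Dw xw; rk_lia.
have unshared y : y \in P :\ x -> (rk B D.1 <= rk B y.1 /\ rk B y.2 <= rk B D.2) \/
                                  (rk B y.1 <= rk B U.1 /\ rk B U.2 <= rk B y.2).
  move=> yS; have /setD1P[_ yP] := yS; have := P_width_neq yS.
  by rewrite neq_ltn => /orP[/(below yP)|/(above yP)]; [left | right].
have [Dx|Dx] := eqVneq (rk B D.1) (rk B x.1).
- apply: (@rigid_of_index x.2) => //; first by right.
  + move=> v vT vw /(cand v vT vw).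
    by move: (rk_width vT) vw Ncentral Dx wU wD Ux xD Uw Dw xw; rk_lia.
  + move=> y /[dup] /setD1P[_ /PT/rk_width yw] /unshared.
    by move: yw Ncentral Dx wU wD Ux xD Uw Dw xw; rk_lia.
  + move=> e [<-|<-] ex; last by rewrite eqxx in ex.
    by apply: (shared_rk DS); rewrite // Dx; left.
- apply: (@rigid_of_index x.1) => //; first by left.
  + move=> v vT vw /(cand v vT vw).
    by move: (rk_width vT) vw Ncentral Dx wU wD Ux xD Uw Dw xw; rk_lia.
  + move=> y /[dup] /setD1P[_ /PT/rk_width yw] /unshared.
    by move: yw Ncentral Dx wU wD Ux xD Uw Dw xw; rk_lia.
  + move=> e [<-|<-] ex; first by rewrite eqxx in ex.
    apply: (shared_rk DS) => //; right.
    by move: Ncentral Dx wU wD Ux xD Uw Dw xw; rk_lia.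
Qed.

End Middle.

Lemma shape_middle : 0 < width B x -> (width B x).+1 < M -> flippable x \/ rigid x.
Proof.
move=> k0 kM; have [U US [wU Ux above]] := neighbour_above kM.
have [D DS [wD xD below]] := neighbour_below k0.
have [central|Ncentral] := eqVneq (rk B D.1) (rk B U.1).+1.
  by left; apply: middle_flippable central.
by right; apply: middle_rigid Ncentral.
Qed.

Lemma shape_top : (width B x).+1 = M -> rigid x.
Proof.
move=> kM; have xw := rk_width xT.
have cand v : v \in T_A B -> width B v = width B x -> fits x v -> rk B v.1 = rk B x.1.
  by move=> vT vw _; move: (rk_T vT) (rk_width vT) (rk_T xT) vw kM xw; rk_lia.
have below_x y : y \in P :\ x -> width B y < width B x.
  move=> yS; have /setD1P[_ /PT/width_lt] := yS; have := P_width_neq yS.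
  by move: kM; rk_lia.
have [k0|k0] := posnP (width B x).
  apply: (@rigid_of_index x.1) => //; first by left.
    by move=> y /below_x; rewrite k0.
  move=> e [<-|<-] ex; first by rewrite eqxx in ex.
  by move: ex; rewrite (@rk_inj _ B x.2 x.1) ?eqxx //; move: k0 xw; rk_lia.
have [D DS [wD xD below]] := neighbour_below k0.
have /setD1P[_ /PT/rk_width Dw] := DS.
have unshared y : y \in P :\ x -> rk B D.1 <= rk B y.1 /\ rk B y.2 <= rk B D.2.
  by move=> /[dup] /setD1P[_ yP] /below_x; apply: below.
have [Dx|Dx] := eqVneq (rk B D.1) (rk B x.1).
- apply: (@rigid_of_index x.2) => //; first by right.
  + move=> y /[dup] /setD1P[_ /PT/rk_width yw] /unshared.
    by move: yw Dx wD xD Dw xw; rk_lia.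
  + move=> e [<-|<-] ex; last by rewrite eqxx in ex.
    by apply: (shared_rk DS); rewrite // Dx; left.
- apply: (@rigid_of_index x.1) => //; first by left.
  + move=> y /[dup] /setD1P[_ /PT/rk_width yw] /unshared.
    by move: yw Dx wD xD Dw xw; rk_lia.
  + move=> e [<-|<-] ex; first by rewrite eqxx in ex.
    by apply: (shared_rk DS) => //; right; move: Dx wD xD Dw xw; rk_lia.
Qed.

Lemma shape : flippable x \/ rigid x.
Proof.
have := width_lt xT; rewrite leq_eqVlt => /orP[/eqP top|kM]; first by right; apply: shape_top.
have [k0|k0] := posnP (width B x); last exact: shape_middle.
by left; apply: shape_bottom.
Qed.

End Shape.

Section DeltaAFacets.
Variables (n : nat) (B : {set 'I_n.+1}).
Hypotheses (B0 : nonzero B) (Bs : sumfree B).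
Implicit Types (S P : {set pt n}).

Lemma DeltaA_chain S : DeltaA B S -> chain S.
Proof.
move=> [/Delta'E[SV Sc] _] u v uS vS; have [->|uv] := eqVneq u v; first exact: nested_refl.
exact: compatible_nested (SV u uS) (SV v vS) (Sc u v uS vS uv).
Qed.

Lemma chain_DeltaA S : S \subset T_A B -> chain S -> DeltaA B S.
Proof.
move=> /subsetP ST S_chain; split; last exact/subsetP.
apply/Delta'E; split=> [y /ST|u v uS vS _]; first exact: T_A_vertex.
exact: nested_compatible Bs (ST u uS) (ST v vS) (S_chain u v uS vS).
Qed.

Lemma DeltaA_facet_full P : facet (DeltaA B) P -> full B P.
Proof.
move=> P_facet l lM; have [_ PT] := P_facet.1; have P_chain := DeltaA_chain P_facet.1.
have [/exists_inP[p pP /eqP]|none] := boolP [exists p in P, width B p == l].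
  by exists p.
have Pl : {in P, forall p, width B p != l}.
  by move=> p pP; apply: contraNneq none => pl; apply/exists_inP; exists p; rewrite ?pl.
have [w [wT wl wP]] := chain_extend PT P_chain lM Pl.
suff : w \in P by move/Pl; rewrite wl eqxx.
suff <- : w |: P = P by apply: setU11.
apply: (facet_le P_facet); last exact: subsetUr.
apply: chain_DeltaA; first by rewrite subUset sub1set wT PT.
move=> u v /setU1P[->|uP] /setU1P[->|vP].
- exact: nested_refl.
- exact: wP.
- by rewrite nestedC wP.
- exact: P_chain.
Qed.

End DeltaAFacets.

Lemma full_chain_cover n (B : {set 'I_n.+1}) (P : {set pt n}) :
  P \subset T_A B -> chain P -> full B P ->
  forall d, d \in B -> exists2 p, p \in P & p.1 = d \/ p.2 = d.
Proof.
move=> PT P_chain P_full d dB; have dM := rk_lt_card dB.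
pose covers l := [exists p in P, (width B p == l) && (rk B p.1 <= rk B d <= rk B p.2)].
have covered : exists l, covers l.
  have M0 : (#|B|).-1 < #|B| by rewrite ltn_predL (leq_ltn_trans _ dM).
  have [p pP pw] := P_full _ M0.
  exists (#|B|).-1; apply/exists_inP; exists p; rewrite // pw eqxx /=.
  by move: pw dM (rk_width (chain_T PT pP)) (rk_T (chain_T PT pP)); rk_lia.
case: (ex_minnP covered) => l /exists_inP[p pP /andP[/eqP pw pd]] l_min.
have pT := chain_T PT pP; have := pT; rewrite mem_T_A => /and3P[p1B p2B _].
suff : rk B p.1 = rk B d \/ rk B p.2 = rk B d.
  by case=> /rk_inj e; exists p => //; [left | right]; apply: e.
have [l0|l_pos] := posnP l; first by move: pd pw l0 (rk_width pT); rk_lia.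
have lM : l < #|B| by rewrite -pw width_lt.
have [p' p'P p'w] := P_full _ (leq_ltn_trans (leq_pred l) lM).
have [p'1 p'2] : rk B p.1 <= rk B p'.1 /\ rk B p'.2 <= rk B p.2.
  by apply: (chain_width_le PT P_chain p'P pP); rewrite p'w pw leq_pred.
have p'd : ~~ (rk B p'.1 <= rk B d <= rk B p'.2).
  apply/negP => p'd; suff : l <= l.-1 by rewrite leqNgt ltn_predL l_pos.
  by apply: l_min; apply/exists_inP; exists p'; rewrite // p'w eqxx.
by move: pd pw p'w l_pos p'1 p'2 p'd (rk_width pT) (rk_width (chain_T PT p'P)); rk_lia.
Qed.

Section CalA.
Variables (m : nat) (A : {set 'I_(2 * m).+1}).
Hypothesis A_calA : in_calA A.
Local Notation n := (2 * m).

Lemma calA_nonzero : nonzero A. Proof. by case: A_calA. Qed.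
Lemma calA_sumfree : sumfree A. Proof. by case: A_calA. Qed.

(* The m sums-to-(n+1) pairs of [n] each meet A at most once, and A has m
   elements, so each pair meets A exactly once. *)
Lemma calA_partner (d : 'I_n.+1) : 0 < d -> d \notin A ->
  exists2 e, e \in A & d + e = n.+1.
Proof.
move=> d0 dNA; pose pair_of (b : 'I_n.+1) := minn b (n.+1 - b).
have pair_eq (b b' : 'I_n.+1) : pair_of b = pair_of b' -> b = b' \/ b + b' = n.+1.
  move=> e; have : b = b' :> nat \/ b + b' = n.+1.
    by move: e (ltn_ord b) (ltn_ord b'); rewrite /pair_of; lia.
  by case=> [/ord_inj|]; [left | right].
have uniq_pairs : uniq (map pair_of (enum A)).
  rewrite map_inj_in_uniq ?enum_uniq // => b b'; rewrite !mem_enum => bA b'A /pair_eq[] // bb'.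
  by have := calA_sumfree bA b'A; rewrite bb' eqxx.
have /mapP[b] : pair_of d \in map pair_of (enum A).
  apply: (uniq_iota_full (a := 1) (k := m) uniq_pairs).
  - move=> y /mapP[b]; rewrite mem_enum => bA ->; rewrite mem_iota.
    by move: (calA_nonzero bA) (ltn_ord b); rewrite /pair_of; lia.
  - by rewrite size_map -cardE; case: A_calA => ->.
  - by rewrite mem_iota; move: d0 (ltn_ord d); rewrite /pair_of; lia.
rewrite mem_enum => bA db; have [bd|] := pair_eq b d (esym db); last by exists b; rewrite // addnC.
by move: dNA; rewrite -bd bA.
Qed.

Section Swap.
Variable c : 'I_n.+1.
Hypothesis cA : c \in A.
Local Notation c' := (inord (n.+1 - c) : 'I_n.+1).

Lemma partner_val : c' = n.+1 - c :> nat.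
Proof. by rewrite inordK //; move: (calA_nonzero cA); lia. Qed.

Lemma partner_sum : c + c' = n.+1.
Proof. by rewrite partner_val; move: (ltn_ord c); lia. Qed.

Lemma partner_notin : c' \notin A.
Proof. by apply/negP => /(calA_sumfree cA); rewrite partner_sum eqxx. Qed.

Lemma mem_swapA i : (i \in swapA A c) = (i != c) && (i \in A) || (i == c').
Proof. by rewrite !inE. Qed.

Lemma notin_swapA : c \notin swapA A c.
Proof.
rewrite mem_swapA eqxx /=; apply: contraNN partner_notin => /eqP <-.
exact: cA.
Qed.

Lemma partner_swapA : c' \in swapA A c.
Proof. by rewrite mem_swapA eqxx orbT. Qed.

Lemma swapA_calA : in_calA (swapA A c).
Proof.
have [cardA _ _] := A_calA; split.
- rewrite /swapA setUC cardsU1 !inE negb_and partner_notin orbT /=.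
  by rewrite -[in RHS]cardA (cardsD1 c A) cA.
- move=> i; rewrite mem_swapA => /orP[/andP[_ /calA_nonzero]//|/eqP ->].
  by rewrite partner_val; move: (ltn_ord c); lia.
- move=> i j; rewrite !mem_swapA => /orP[/andP[ic iA]|/eqP ->] /orP[/andP[jc jA]|/eqP ->].
  + exact: calA_sumfree.
  + apply: contra_neq ic => e; apply: ord_inj.
    by move: e partner_sum; lia.
  + apply: contra_neq jc => e; apply: ord_inj.
    by move: e partner_sum; lia.
  + by move: partner_sum; lia.
Qed.

End Swap.

End CalA.

Section Paths.
Variables (n : nat) (A : {set 'I_n.+1}).
Implicit Types (u v : pt n) (s : seq (pt n)).
Local Notation "s `_ k" := (nth (pt0 n) s k).

Lemma hstep_coords u v : hstep A u v -> v.1 = u.1 /\ v.2 < u.2.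
Proof. by case/andP => /eqP -> /and4P[]. Qed.

Lemma vstep_coords u v : vstep A u v -> v.2 = u.2 /\ u.1 < v.1.
Proof. by case/andP => /eqP -> /and4P[]. Qed.

Lemma path_end_diag s : is_path A s -> (s`_(size s).-1).1 = (s`_(size s).-1).2.
Proof.
case: s => [//|p0 s] /and5P[_ _ _ _ /and3P[_ _ /eqP]].
by rewrite nth_last.
Qed.

Lemma turn_shared (P : {set pt n}) x : is_turn A P x ->
  forall e, x.1 = e \/ x.2 = e -> shared P x e.
Proof.
case=> s [s_path sP [k [ks <- x_turn]]] e.
have shared_at j : j < size s -> s`_j != s`_k ->
    (s`_j).1 = e \/ (s`_j).2 = e -> shared P s`_k e.
  move=> js jk je; exists s`_j; first by rewrite !inE jk -sP inE mem_nth.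
  by case: je => ->; rewrite eqxx ?orbT.
have k0 : 0 < k by case/orP: x_turn => /andP[].
have pk : k.-1 < size s by rewrite (leq_ltn_trans (leq_pred k)).
have diag : k.+1 = size s -> (s`_k).1 = (s`_k).2.
  by move=> /(congr1 predn) /= ->; apply: path_end_diag.
case/orP: x_turn => /and3P[_ step_in step_out].
- have [p1 p2] := hstep_coords step_in.
  have pk_neq : s`_k.-1 != s`_k by apply: contraTneq p2 => ->; rewrite ltnn.
  case=> xe; first by apply: (shared_at k.-1) => //; left; rewrite -p1.
  case/orP: step_out => [/eqP/diag x12|/andP[ks' /vstep_coords[n2 n1]]].
    by apply: (shared_at k.-1) => //; left; rewrite -p1 x12.
  apply: (shared_at k.+1) => //; last by right; rewrite n2.
  by apply: contraTneq n1 => ->; rewrite ltnn.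
- have [p2 p1] := vstep_coords step_in.
  have pk_neq : s`_k.-1 != s`_k by apply: contraTneq p1 => ->; rewrite ltnn.
  case=> xe; last by apply: (shared_at k.-1) => //; right; rewrite -p2.
  case/orP: step_out => [/eqP/diag x12|/andP[ks' /hstep_coords[n1 n2]]].
    by apply: (shared_at k.-1) => //; right; rewrite -p2 -x12.
  apply: (shared_at k.+1) => //; last by left; rewrite n1.
  by apply: contraTneq n2 => ->; rewrite ltnn.
Qed.

End Paths.

(** * Replacing a point of a facet of Delta_A *)

Section Exchange.
Variables (m : nat) (A : {set 'I_(2 * m).+1}) (P : {set pt (2 * m)}) (x : pt (2 * m)).
Hypotheses (A_calA : in_calA A) (P_facet : facet (DeltaA A) P) (xP : x \in P).
Local Notation n := (2 * m).

Let A0 := calA_nonzero A_calA.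
Let As := calA_sumfree A_calA.
Let PT : P \subset T_A A := P_facet.1.2.
Let P_chain := DeltaA_chain P_facet.1.
Let P_full := DeltaA_facet_full A0 As P_facet.

Lemma P_vertex p : p \in P -> vertexV p.
Proof. by move=> /(subsetP PT); apply: T_A_vertex. Qed.

Lemma compatible_fits v : vertexV v -> {in P :\ x, forall p, compatible p v} ->
  fits P x v.
Proof.
move=> vV vc p /[dup] /setD1P[_ pP] /vc pv.
by rewrite nestedC; apply: compatible_nested (P_vertex pP) vV pv.
Qed.

Lemma index_of_outside v d : vertexV v -> {in P :\ x, forall p, compatible p v} ->
  v.1 = d \/ v.2 = d -> d \notin A ->
  exists2 e : 'I_n.+1, d + e = n.+1 & has_index A P x e.
Proof.
move=> vV vc vd dNA; have d0 : 0 < d by move: vV => /andP[/andP[]]; case: vd => ->; lia.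
have [e eA de] := calA_partner A_calA d0 dNA; exists e => //.
have avoid y : y \in P :\ x -> ~ (y.1 = e \/ y.2 = e).
  move=> yS ye; have /setD1P[_ yP] := yS; have /andP[/negP + _] := vc y yS; apply.
  by apply: (K_gen_coord_sum (P_vertex yP) vV ye vd); rewrite addnC.
split=> //.
  have [p pP pe] := full_chain_cover PT P_chain P_full eA.
  have [<-//|px] := eqVneq p x.
  by case: (avoid p _ pe); rewrite !inE px pP.
move=> y yP yx; have yS : y \in P :\ x by rewrite !inE yx yP.
by split; apply/eqP => ye; apply: (avoid y yS); [left | right].
Qed.

Lemma flippable_exchange : flippable A P x -> exists2 q, q \in T_A A & exchange P x q.
Proof.
move=> /[dup] x_flip [[q [qT qNP xNq q_fits q_unique]] _]; exists q => //.
have qV := T_A_vertex A0 As qT; split=> //.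
- by rewrite /compatible -negb_or negbK (not_nested_K_gen (P_vertex xP) qV xNq).
- move=> p /[dup] /setD1P[_ pP] pS; apply: nested_compatible As (subsetP PT p pP) qT _.
  by rewrite nestedC q_fits.
move=> v vV vNS vc; have [vT|vNT] := boolP (v \in T_A A).
  case: (q_unique v vT (compatible_fits vV vc)) => [vP|]; last by right.
  by left; apply/eqP; move: vNS; rewrite !inE vP andbT negbK.
exfalso; have [d vd dNA] : exists2 d, v.1 = d \/ v.2 = d & d \notin A.
  move: vNT; rewrite mem_T_A; case/andP: vV => /andP[_ ->] _; rewrite andbT negb_and.
  by case/orP=> ?; [exists v.1; [left|] | exists v.2; [right|]].
have [e _ x_index] := index_of_outside vV vc vd dNA.
exact: shared_no_index x_flip.2 x_index.
Qed.

Section Rigid.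
Variable c : 'I_n.+1.
Hypotheses (x_rigid : rigid A P x) (x_index : has_index A P x c).
Local Notation A' := (swapA A c).
Local Notation c' := (inord (n.+1 - c) : 'I_n.+1).

Let cA : c \in A. Proof. by case: x_index. Qed.
Let A'_calA := swapA_calA A_calA cA.
Let A'0 := calA_nonzero A'_calA.
Let A's := calA_sumfree A'_calA.
Let card_A' : #|A'| = m. Proof. by case: A'_calA. Qed.
Let m0 : 0 < m. Proof. by have [+ _ _] := A_calA; rewrite (cardD1 c) cA => <-. Qed.

Lemma punctured_T' : P :\ x \subset T_A A'.
Proof.
apply/subsetP => p /setD1P[px pP]; have [_ _ c_unused] := x_index.
have [p1c p2c] := c_unused p pP px.
by move: (subsetP PT p pP); rewrite !mem_T_A !mem_swapA p1c p2c => /and3P[-> -> ->].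
Qed.

Lemma punctured_chain : chain (P :\ x).
Proof. by move=> u v /setD1P[_ uP] /setD1P[_ vP]; apply: P_chain. Qed.

Lemma x_notin_T' : x \notin T_A A'.
Proof.
have cNA' := notin_swapA A_calA cA.
by rewrite mem_T_A; have [_ [->|->] _] := x_index; rewrite (negPf cNA') ?andbF.
Qed.

Lemma card_punctured : #|P :\ x| = m.-1.
Proof.
have cardP : #|P| = m.
  have [card_A _ _] := A_calA.
  by move: (chain_card PT P_chain) (full_card P_full); rewrite card_A; lia.
by move: cardP; rewrite (cardsD1 x P) xP add1n => /(congr1 predn).
Qed.

Lemma punctured_missing_width :
  exists2 l, l < #|A'| & {in P :\ x, forall p, width A' p != l}.
Proof.
have [/existsP[l /forall_inP Sl]|all_widths] :=
  boolP [exists l : 'I_#|A'|, [forall p in P :\ x, width A' p != l]].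
  by exists l.
suff : m <= m.-1 by rewrite leqNgt ltn_predL m0.
rewrite -{1}card_A' -card_punctured full_card // => l lm.
move: all_widths; rewrite negb_exists => /forallP/(_ (Ordinal lm)).
by rewrite negb_forall_in => /exists_inP[p pS /negPn/eqP pl]; exists p.
Qed.

Lemma fits_T'_notin_T v : v \in T_A A' -> fits P x v -> v \notin P :\ x -> v \notin T_A A.
Proof.
move=> vT' v_fits vNS; apply/negP => vT; have [x_cand _] := x_rigid.
have vx : v = x by apply/eqP; move: vNS; rewrite !inE x_cand // andbT negbK.
by move: x_notin_T'; rewrite -vx vT'.
Qed.

Lemma partner_coord v : v \in T_A A' -> v \notin T_A A -> v.1 = c' \/ v.2 = c'.
Proof.
rewrite !mem_T_A !mem_swapA => /and3P[+ + ->]; rewrite andbT.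
by case/orP=> [/andP[_ ->]|/eqP ->]; case/orP=> [/andP[_ ->]|/eqP ->]; by [left | right].
Qed.

Lemma fitting_full w : w \in T_A A' -> fits P x w -> w \notin P :\ x ->
  full A' (w |: (P :\ x)).
Proof.
move=> wT' w_fits wNS; apply: chain_full.
- by rewrite subUset sub1set wT' punctured_T'.
- move=> u u' /setU1P[->|uS] /setU1P[->|u'S].
  + exact: nested_refl.
  + exact: w_fits.
  + by rewrite nestedC w_fits.
  + exact: punctured_chain.
- by rewrite cardsU1 wNS card_punctured card_A' add1n prednK.
Qed.

Lemma fitting_same_width v w :
  v \in T_A A' -> fits P x v -> v \notin P :\ x ->
  w \in T_A A' -> fits P x w -> w \notin P :\ x -> width A' v = width A' w.
Proof.
move=> vT' v_fits vNS wT' w_fits wNS.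
have [p /setU1P[<-//|pS] pv] := fitting_full wT' w_fits wNS (width_lt vT').
have pT' := subsetP punctured_T' p pS.
by move: vNS; rewrite (nested_width_inj vT' pT' (v_fits p pS) (esym pv)) pS.
Qed.

Lemma fitting_unique v w :
  v \in T_A A' -> fits P x v -> v \notin P :\ x ->
  w \in T_A A' -> fits P x w -> w \notin P :\ x -> v = w.
Proof.
move=> vT' v_fits vNS wT' w_fits wNS.
have vw := fitting_same_width vT' v_fits vNS wT' w_fits wNS.
have c'_rk u : u \in T_A A' -> fits P x u -> u \notin P :\ x ->
    rk A' u.1 = rk A' c' \/ rk A' u.2 = rk A' c'.
  move=> uT' u_fits uNS.
  by case: (partner_coord uT' (fits_T'_notin_T uT' u_fits uNS)) => ->; [left | right].
have vc' := c'_rk v vT' v_fits vNS; have wc' := c'_rk w wT' w_fits wNS.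
have [v1w1|v1w1] := eqVneq (rk A' v.1) (rk A' w.1); first exact: rk_width_inj vT' wT' v1w1 vw.
exfalso; have [v0|v_pos] := posnP (width A' v).
  by move: vc' wc' vw v0 v1w1 (rk_width vT') (rk_width wT'); rk_lia.
(* The point p of width [width v - 1] lies in both v and w, which meet only at c'. *)
have [p /setU1P[pw|pS] pv] := fitting_full wT' w_fits wNS
  (leq_ltn_trans (leq_pred _) (width_lt vT')).
  by move: pv; rewrite pw -vw; lia.
have pT' := subsetP punctured_T' p pS; have /setD1P[_ pP] := pS.
have pv' := v_fits p pS; have pw' := w_fits p pS.
rewrite (nested_rk vT' pT') in pv'; rewrite (nested_rk wT' pT') in pw'.
have : rk A' p.1 = rk A' c'.
  by move: vc' wc' vw v1w1 pv pv' pw' (rk_width vT') (rk_width wT') (rk_width pT'); rk_lia.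
move: pT' (subsetP PT p pP); rewrite !mem_T_A => /and3P[p1A' _ _] /and3P[p1A _ _].
move/(rk_inj p1A' (partner_swapA A c)) => p1c'.
by move: p1A; rewrite p1c' (negPf (partner_notin A_calA cA)).
Qed.


Lemma outside_partner v d : vertexV v -> {in P :\ x, forall p, compatible p v} ->
  v.1 = d \/ v.2 = d -> d \notin A -> d = c'.
Proof.
move=> vV vc vd dNA; have [e de e_index] := index_of_outside vV vc vd dNA.
have [_ [c0 [_ c0_unique]]] := x_rigid.
have ec : e = c by rewrite (c0_unique e e_index) (c0_unique c x_index).
by apply: ord_inj; rewrite (partner_val A_calA cA); move: de; rewrite ec; lia.
Qed.

Lemma outside_T_in_T' v : vertexV v -> {in P :\ x, forall p, compatible p v} ->
  v \notin T_A A -> v \in T_A A'.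
Proof.
move=> vV vc vNT; have /andP[/andP[_ v12] vNanti] := vV.
have coord_A' d d' : (v.1 = d /\ v.2 = d') \/ (v.1 = d' /\ v.2 = d) -> d \in A'.
  move=> vdd'; have vd : v.1 = d \/ v.2 = d by case: vdd' => -[]; [left | right].
  have [dA|dNA] := boolP (d \in A); last by rewrite (outside_partner vV vc vd dNA) partner_swapA.
  rewrite mem_swapA dA andbT; apply/orP; left; apply: contraNneq vNanti => dc.
  have d'NA : d' \notin A.
    by apply: contraNN vNT => d'A; rewrite mem_T_A v12 andbT; case: vdd' => -[-> ->]; rewrite dA d'A.
  have vd' : v.1 = d' \/ v.2 = d' by case: vdd' => -[]; [right | left].
  apply/eqP; rewrite -[in RHS](partner_sum A_calA cA) -(outside_partner vV vc vd' d'NA) -dc.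
  by case: vdd' => -[-> ->]; rewrite // addnC.
by rewrite mem_T_A v12 (coord_A' v.1 v.2) ?(coord_A' v.2 v.1) //; [right | left].
Qed.

Lemma rigid_exchange : exists2 q, q \in T_A A' & exchange P x q.
Proof.
have [l lA' Sl] := punctured_missing_width.
have [q [qT' ql q_fits]] := chain_extend punctured_T' punctured_chain lA' Sl.
have qNS : q \notin P :\ x by apply/negP => /Sl; rewrite ql eqxx.
have qNT := fits_T'_notin_T qT' q_fits qNS.
have qV := T_A_vertex A'0 A's qT'.
exists q => //; split=> //.
- by apply: contra qNT; apply: (subsetP PT).
- rewrite /compatible negb_and !negbK; apply/orP; left.
  have [_ xc _] := x_index.
  exact: K_gen_coord_sum (P_vertex xP) qV xc (partner_coord qT' qNT) (partner_sum A_calA cA).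
- move=> p pS; rewrite compatibleC; apply: nested_compatible A's qT' _ (q_fits p pS).
  exact: subsetP punctured_T' p pS.
move=> v vV vNS vc; have v_fits := compatible_fits vV vc.
have [vT|vNT] := boolP (v \in T_A A).
  left; have [x_cand _] := x_rigid.
  by apply/eqP; move: vNS; rewrite !inE x_cand // andbT negbK.
by right; apply: fitting_unique (outside_T_in_T' vV vc vNT) v_fits vNS qT' q_fits qNS.
Qed.

End Rigid.

Lemma exchange_exists : exists q, exchange P x q.
Proof.
case: (shape PT P_chain P_full xP) => [/flippable_exchange[q _ xq]|x_rigid].
  by exists q.
have [c [x_index _]] := x_rigid.2; have [q _ xq] := rigid_exchange x_rigid x_index.
by exists q.
Qed.

Lemma turn_flippable : is_turn A P x -> flippable A P x.
Proof.
case: (shape PT P_chain P_full xP) => // -[_ [c [x_index _]]] /turn_shared x_shared.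
by case: (shared_no_index x_shared x_index).
Qed.

Lemma index_rigid c : has_index A P x c -> rigid A P x.
Proof.
by case: (shape PT P_chain P_full xP) => // -[_ x_shared] /(shared_no_index x_shared).
Qed.

Lemma turn_replacement : facet (@Delta' n) P -> is_turn A P x ->
  exists Q, [/\ facet (DeltaA A) Q, Q != P, P :\ x \subset Q,
    (forall Q', facet (DeltaA A) Q' -> Q' != P -> P :\ x \subset Q' -> Q' = Q) &
    forall F, (facet (@Delta' n) F /\ P :\ x \subset F) <-> (F = P \/ F = Q)].
Proof.
move=> P_Delta' /turn_flippable/flippable_exchange[q qT xq].
have ST : P :\ x \subset T_A A by apply: subset_trans (subD1set P x) PT.
exists (q |: (P :\ x)); split.
- exact: exchange_DeltaA_facet.
- exact: exchange_neq.
- exact: subsetUr.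
- move=> F F_facet FNP sF.
  by case: (DeltaA_facets_over_punctured P_Delta' xP xq qT ST F_facet sF) => // FP; rewrite FP eqxx in FNP.
- exact: facets_over_punctured.
Qed.

Lemma index_replacement c : facet (@Delta' n) P -> has_index A P x c ->
  DeltaA (swapA A c) (P :\ x) /\
  exists Q, [/\ facet (DeltaA (swapA A c)) Q, Q != P, P :\ x \subset Q,
    (forall Q', facet (DeltaA (swapA A c)) Q' -> P :\ x \subset Q' -> Q' = Q) &
    forall F, (facet (@Delta' n) F /\ P :\ x \subset F) <-> (F = P \/ F = Q)].
Proof.
move=> P_Delta' x_index; have x_rigid := index_rigid x_index.
have [q qT xq] := rigid_exchange x_rigid x_index; have ST := punctured_T' x_index.
split; first by split; [apply: Delta'S P_facet.1.1 (subD1set P x)|].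
exists (q |: (P :\ x)); split.
- exact: exchange_DeltaA_facet.
- exact: exchange_neq.
- exact: subsetUr.
- move=> F F_facet sF.
  case: (DeltaA_facets_over_punctured P_Delta' xP xq qT ST F_facet sF) => // FP.
  by move: (x_notin_T' x_index); rewrite (subsetP F_facet.1.2) // FP.
- exact: facets_over_punctured.
Qed.

End Exchange.


Theorem lemma5p2 (m : nat) (A : {set 'I_(2 * m).+1})
  (P : {set pt (2 * m)}) (x : pt (2 * m)) :
  in_calA A -> facet (@Delta' (2 * m)) P -> facet (DeltaA A) P -> x \in P ->
  (* exactly two facets of Delta' contain P \ {x} *)
  (exists Q, Q != P /\
     forall F, (facet (@Delta' (2 * m)) F /\ P :\ x \subset F) <-> (F = P \/ F = Q)) /\
  (* (i) x is a turn *)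
  (is_turn A P x ->
     exists Q, [/\ facet (DeltaA A) Q, Q != P, P :\ x \subset Q,
       (forall Q', facet (DeltaA A) Q' -> Q' != P -> P :\ x \subset Q' -> Q' = Q) &
       forall F, (facet (@Delta' (2 * m)) F /\ P :\ x \subset F) <-> (F = P \/ F = Q)]) /\
  (* (ii) x is isolated with index i *)
  (forall i, is_isolated A P x -> has_index A P x i ->
     DeltaA (swapA A i) (P :\ x) /\
     exists Q, [/\ facet (DeltaA (swapA A i)) Q, Q != P, P :\ x \subset Q,
       (forall Q', facet (DeltaA (swapA A i)) Q' -> P :\ x \subset Q' -> Q' = Q) &
       forall F, (facet (@Delta' (2 * m)) F /\ P :\ x \subset F) <-> (F = P \/ F = Q)]).
Proof.
move=> A_calA P_Delta' P_facet xP; split; [|split].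
- have [q xq] := exchange_exists A_calA P_facet xP.
  by exists (q |: (P :\ x)); split; [exact: exchange_neq | exact: facets_over_punctured].
- exact: turn_replacement.
(* An index already forces x to be isolated, so [is_isolated] is not needed. *)
- by move=> c _; apply: index_replacement.
Qed.
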